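(* Let $\lambda$ be a nonzero real number and $\delta\in\mathbb{C}$ with $\mathrm{Re}(\delta)>0$. (i) For every $p\in\mathbb{N}$ and every real $x$ with $0<x<1/|\lambda|$, \[ \Big(\frac{d}{dx}x\Big)^{p}\big[x^{\delta-1}e_{\lambda}(x,\ \delta|p)\big]=x^{\delta-1}e_{\lambda}(x). \] (ii) For every complex $x$ with $|x|<1/|\lambda|$ and every $z\in\mathbb{C}$ with $|z|<|\delta|$, \[ \sum_{k=0}^{\infty}e_{\lambda}(x,\ \delta|k)z^{k}=e_{\lambda}(x)+z\,e_{\lambda}(x,\ \delta-z|1). \]
   Context: For nonzero real $\lambda$: $(1)_{0,\lambda}=1$, $(1)_{n,\lambda}=1(1-\lambda)\cdots(1-(n-1)\lambda)$ for $n\ge1$. $e_\lambda(x)=\sum_{n\ge0}(1)_{n,\lambda}x^n/n!$ $(=(1+\lambda x)^{1/\lambda}$ for real $x$ with $|\lambda x|<1)$. For $k\in\mathbb{N}\cup\{0\}$ and $\delta$ with $n+\delta\neq0$ for all $n\ge0$, $e_{\lambda}(x,\ \delta|k)=\sum_{n=0}^{\infty}\frac{(1)_{n,\lambda}}{n!\,(n+\delta)^{k}}x^{n}$ (in (ii), $e_\lambda(x,\delta-z|1)=\sum_{n\ge0}\frac{(1)_{n,\lambda}x^n}{n!(n+\delta-z)}$). The operator $\frac{d}{dx}x$ sends $f(x)$ to $\frac{d}{dx}\big(xf(x)\big)$, and $(\frac{d}{dx}x)^p$ is its $p$-fold iterate. For $x>0$, $x^{\delta-1}=\exp((\delta-1)\log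 x)$. *)

From Stdlib Require Import Reals Factorial.
From Coquelicot Require Import Coquelicot.
Open Scope R_scope.

Fixpoint falling_lam (lam : R) (n : nat) : R :=
  match n with
  | O => 1
  | S m => falling_lam lam m * (1 - INR m * lam)
  end.

Fixpoint Cpow (z : C) (n : nat) : C :=
  match n with
  | O => RtoC 1
  | S m => Cmult z (Cpow z m)
  end.

Definition CSeries (a : nat -> C) : C :=
  (Series (fun n => Re (a n)), Series (fun n => Im (a n))).

Definition e_lam (lam : R) (x : C) : C :=
  CSeries (fun n => Cmult (RtoC (falling_lam lam n / INR (Factorial.fact n))) (Cpow x n)).

Definition e_lam_gen (lam : R) (x : C) (delta : C) (k : nat) : C :=
  CSeries (fun n =>
    Cmult (Cdiv (RtoC (falling_lam lam n / INR (Factorial.fact n)))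
                (Cpow (Cplus (RtoC (INR n)) delta) k))
          (Cpow x n)).

Definition Cexp (z : C) : C :=
  Cmult (RtoC (exp (Re z))) (cos (Im z), sin (Im z)).

Definition Rcpow (x : R) (w : C) : C := Cexp (Cmult w (RtoC (ln x))).

Definition Dx_x (f : R -> C) : R -> C :=
  fun x => (Derive (fun t => Re (Cmult (RtoC t) (f t))) x,
            Derive (fun t => Im (Cmult (RtoC t) (f t))) x).

Fixpoint Dx_x_iter (p : nat) (f : R -> C) : R -> C :=
  match p with
  | O => f
  | S q => Dx_x (Dx_x_iter q f)
  end.

From Pilot Require Import Defs.
From Stdlib Require Import Reals Lra Lia.
From Coquelicot Require Import Coquelicot.
Open Scope R_scope.

(* (i) The coefficients c_{n,k} = (1)_{n,lam} / (n! (n + delta)^k) satisfy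
   (n + delta) c_{n,k+1} = c_{n,k}.  Since d/dx (x^delta f) = x^(delta-1) (delta f + x f'), the
   operator d/dx x maps x^(delta-1) e_lam(x, delta|k+1) to x^(delta-1) e_lam(x, delta|k); p steps
   reach k = 0, i.e. e_lam(x).  Complex values of a real variable are differentiated
   componentwise, as in [Dx_x].
   (ii) With w_n = z / (n + delta), |w_n| <= q := |z| / |delta| < 1, the k-th term of the series is
   sum_n (1)_{n,lam} x^n / n! * w_n^k.  Summing the geometric series in k first gives the factor
   1 / (1 - w_n) = 1 + z / (n + delta - z).  The interchange holds because the k-tails are
   bounded by q^(K+1) / (1 - q) times the majorant sum_n (1)_{n,-|lam|} |x|^n / n!, whose radius
   of convergence is 1 / |lam|. *)

Definition e_coef (lam : R) (n : nat) : R := falling_lam lam n / INR (Factorial.fact n).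

Lemma e_coef_S (lam : R) (n : nat) :
  e_coef lam (S n) = e_coef lam n * (1 - INR n * lam) / INR (S n).
Proof.
  unfold e_coef; cbn [falling_lam]; rewrite fact_simpl, mult_INR.
  pose proof (INR_fact_neq_0 n); pose proof (lt_0_INR (S n) (Nat.lt_0_succ n)).
  field; lra.
Qed.

Lemma e_coef_opp_pos (L : R) (n : nat) : 0 <= L -> 0 < e_coef (- L) n.
Proof.
  intros HL; induction n as [|n IH].
  - unfold e_coef; simpl; lra.
  - rewrite e_coef_S; pose proof (pos_INR n); pose proof (lt_0_INR (S n) (Nat.lt_0_succ n)).
    apply Rdiv_lt_0_compat; [apply Rmult_lt_0_compat|]; nra.
Qed.

Lemma Rabs_e_coef_le (lam : R) (n : nat) : Rabs (e_coef lam n) <= e_coef (- Rabs lam) n.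
Proof.
  induction n as [|n IH].
  - unfold e_coef; simpl; rewrite Rdiv_1_r, Rabs_R1; lra.
  - rewrite !e_coef_S; pose proof (pos_INR n); pose proof (lt_0_INR (S n) (Nat.lt_0_succ n)).
    unfold Rdiv; rewrite !Rabs_mult, (Rabs_inv (INR (S n))), (Rabs_pos_eq (INR (S n))) by lra.
    apply Rmult_le_compat_r; [left; apply Rinv_0_lt_compat; lra|].
    apply Rmult_le_compat; try apply Rabs_pos; [exact IH|].
    eapply Rle_trans; [apply Rabs_triang|].
    rewrite Rabs_R1, Rabs_Ropp, Rabs_mult, (Rabs_pos_eq (INR n)); lra.
Qed.

(* Ratio test: consecutive coefficients have ratio (1 + n L) / (n + 1) = L + (1 - L) / (n + 1). *)
Lemma CV_radius_e_coef_opp (L : R) : 0 < L -> CV_radius (e_coef (- L)) = / L.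
Proof.
  intros HL; apply CV_radius_finite_DAlembert; [|exact HL|].
  - intros n; pose proof (e_coef_opp_pos L n); lra.
  - apply is_lim_seq_ext with (fun n => L + (1 - L) * / INR (S n)).
    + intros n; rewrite e_coef_S; pose proof (e_coef_opp_pos L n); pose proof (pos_INR n).
      pose proof (lt_0_INR (S n) (Nat.lt_0_succ n)).
      replace (e_coef (- L) n * (1 - INR n * - L) / INR (S n) / e_coef (- L) n)
        with ((1 + INR n * L) / INR (S n)) by (field; lra).
      rewrite Rabs_pos_eq by (apply Rdiv_le_0_compat; nra).
      rewrite S_INR; field; lra.
    + replace (Finite L) with (Finite (L + (1 - L) * 0)) by (f_equal; ring).
      apply is_lim_seq_plus'; [apply is_lim_seq_const|].
      replace (Finite ((1 - L) * 0)) with (Rbar_mult (1 - L) 0) by reflexivity.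
      apply is_lim_seq_scal_l.
      replace (Finite 0) with (Rbar_inv p_infty) by reflexivity.
      apply is_lim_seq_inv; [|discriminate].
      apply (is_lim_seq_incr_1 INR), is_lim_seq_INR.
Qed.

Lemma CV_radius_le_of_Rabs_le (a b : nat -> R) :
  (forall n, Rabs (a n) <= b n) -> Rbar_le (CV_radius b) (CV_radius a).
Proof.
  intros Hab; unfold CV_radius.
  apply (proj2 (Lub_Rbar_correct (CV_disk b))); intros r Hr.
  apply (proj1 (Lub_Rbar_correct (CV_disk a))).
  apply (@ex_series_le R_AbsRing R_CompleteNormedModule _ (fun n => Rabs (b n * r ^ n)));
    [intros n|exact Hr].
  change (norm (Rabs (a n * r ^ n))) with (Rabs (Rabs (a n * r ^ n))).
  rewrite Rabs_Rabsolu, !Rabs_mult.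
  apply Rmult_le_compat_r; [apply Rabs_pos|].
  eapply Rle_trans; [apply Hab|apply Rle_abs].
Qed.

Lemma Re_sum_n (a : nat -> C) (N : nat) : Re (sum_n a N) = sum_n (fun n => Re (a n)) N.
Proof.
  induction N as [|N IH]; [now rewrite !sum_O|].
  rewrite !sum_Sn, <- IH; apply re_plus.
Qed.

Lemma Im_sum_n (a : nat -> C) (N : nat) : Im (sum_n a N) = sum_n (fun n => Im (a n)) N.
Proof.
  induction N as [|N IH]; [now rewrite !sum_O|].
  rewrite !sum_Sn, <- IH; apply im_plus.
Qed.

(* The uniform structure of [C] is the product one. *)
Lemma is_series_C (a : nat -> C) (l : C) :
  is_series a l <->
  is_series (fun n => Re (a n)) (Re l) /\ is_series (fun n => Im (a n)) (Im l).
Proof.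
  unfold is_series; split.
  - intros H; split; apply filterlim_locally; intros eps;
      refine (filter_imp _ _ _ (proj1 (filterlim_locally _ _) H eps)); intros N [Hre Him].
    + now rewrite <- Re_sum_n.
    + now rewrite <- Im_sum_n.
  - intros [Hre Him]; apply filterlim_locally; intros eps.
    refine (filter_imp _ _ _ (filter_and _ _ (proj1 (filterlim_locally _ _) Hre eps)
                                             (proj1 (filterlim_locally _ _) Him eps))).
    intros N [H1 H2]; split; [rewrite Re_sum_n|rewrite Im_sum_n]; assumption.
Qed.

Lemma CSeries_unique (a : nat -> C) (l : C) : is_series a l -> CSeries a = l.
Proof.
  intros [Hre Him]%is_series_C; unfold CSeries.
  rewrite (is_series_unique _ _ Hre), (is_series_unique _ _ Him); now destruct l.
Qed.

Lemma CSeries_correct (a : nat -> C) : ex_series a -> is_series a (CSeries a).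
Proof. intros [l Hl]; now rewrite (CSeries_unique _ _ Hl). Qed.

Lemma CSeries_ext (a b : nat -> C) : (forall n, a n = b n) -> CSeries a = CSeries b.
Proof. intros Hab; unfold CSeries; f_equal; apply Series_ext; intros n; now rewrite Hab. Qed.

Lemma norm_is_series_le {K : AbsRing} {V : NormedModule K} (a : nat -> V) (l : V)
  (b : nat -> R) (L : R) :
  is_series a l -> (forall n, norm (a n) <= b n) -> is_series b L -> norm l <= L.
Proof.
  intros Ha Hab Hb.
  assert (Hnorm : is_lim_seq (fun N => norm (sum_n a N)) (norm l))
    by exact (filterlim_comp _ _ _ (sum_n a) norm _ _ _ Ha (filterlim_norm l)).
  refine (is_lim_seq_le _ (sum_n b) _ _ _ Hnorm (Hb : is_lim_seq (sum_n b) L)); intros N.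
  exact (Rle_trans _ _ _ (norm_sum_n_m a 0 N) (sum_n_m_le _ _ 0 N Hab)).
Qed.

Lemma is_series_of_norm_le {K : AbsRing} {V : NormedModule K} (a : nat -> V) (l : V)
  (e : nat -> R) :
  (forall N, norm (minus (sum_n a N) l) <= e N) -> is_lim_seq e 0 -> is_series a l.
Proof.
  intros Hae He; apply filterlim_locally_ball_norm; intros eps.
  refine (filter_imp _ _ _ (proj2 (is_lim_seq_spec e 0) He eps)); intros N HN; cbv beta in HN.
  eapply Rle_lt_trans; [apply Hae|]; eapply Rle_lt_trans; [apply Rle_abs|].
  now rewrite Rminus_0_r in HN.
Qed.

Lemma is_series_sum_n {K : AbsRing} {V : NormedModule K} (f : nat -> nat -> V)
  (s : nat -> V) (M : nat) :
  (forall k, is_series (f k) (s k)) ->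
  is_series (fun n => sum_n (fun k => f k n) M) (sum_n s M).
Proof.
  intros Hf; induction M as [|M IH].
  - rewrite sum_O; apply (is_series_ext _ _ _ (fun n => eq_sym (sum_O _)) (Hf 0%nat)).
  - rewrite sum_Sn; apply (is_series_ext _ _ _ (fun n => eq_sym (sum_Sn _ _))).
    exact (is_series_plus _ _ _ _ IH (Hf (S M))).
Qed.

Lemma inv_sub_geometric_sum (w : C) (M : nat) : w <> 1%C ->
  (/ (1 - w) - sum_n (fun k => Cpow w k) M = Cpow w (S M) / (1 - w))%C.
Proof.
  intros Hw; assert (Hw' : (1 - w)%C <> 0%C)
    by (intros E; apply Hw; rewrite <- (Cplus_0_l w), <- E; ring).
  induction M as [|M IH].
  - rewrite sum_O; simpl; field; exact Hw'.
  - rewrite sum_Sn; change (plus ?a ?b) with (Cplus a b).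
    replace (/ (1 - w) - (sum_n (fun k => Cpow w k) M + Cpow w (S M)))%C
      with (/ (1 - w) - sum_n (fun k => Cpow w k) M - Cpow w (S M))%C by ring.
    rewrite IH; simpl; field; exact Hw'.
Qed.

Lemma is_series_geometric_interchange (u w s : nat -> C) (U : nat -> R) (SU q : R) (L : C) :
  (forall n, Cmod (u n) <= U n) -> is_series U SU ->
  q < 1 -> (forall n, Cmod (w n) <= q) ->
  (forall k, is_series (fun n => u n * Cpow (w n) k)%C (s k)) ->
  is_series (fun n => u n / (1 - w n))%C L ->
  is_series s L.
Proof.
  intros HuU HU Hq1 Hwq Hs HL.
  assert (Hq0 : 0 <= q) by exact (Rle_trans _ _ _ (Cmod_ge_0 (w 0%nat)) (Hwq 0%nat)).
  assert (H1w : forall n, 1 - q <= Cmod (1 - w n)%C).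
  { intros n; pose proof (Cmod_triangle (1 - w n)%C (w n)) as Htri.
    replace (1 - w n + w n)%C with (RtoC 1) in Htri by ring.
    rewrite Cmod_1 in Htri; pose proof (Hwq n); lra. }
  assert (Hw1 : forall n, (1 - w n)%C <> 0%C).
  { intros n E; pose proof (H1w n) as H; rewrite E, Cmod_0 in H; lra. }
  assert (Hpt : forall n M, (u n / (1 - w n) - u n * sum_n (fun k => Cpow (w n) k) M)%C
                            = (u n * (Cpow (w n) (S M) / (1 - w n)))%C).
  { intros n M; rewrite <- inv_sub_geometric_sum by (intros E; apply (Hw1 n); rewrite E; ring).
    unfold Cdiv; ring. }
  assert (Htail : forall M, is_series (fun n => u n * (Cpow (w n) (S M) / (1 - w n)))%C
                                      (L - sum_n s M)%C).
  { intros M; refine (is_series_ext _ _ _ _ (is_series_minus _ _ _ _ HL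
      (is_series_sum_n (fun k n => u n * Cpow (w n) k)%C s M Hs))); intros n.
    rewrite (sum_n_mult_l (K := C_Ring)); exact (Hpt n M). }
  apply (is_series_of_norm_le s L (fun M => SU * (q ^ S M / (1 - q)))).
  - intros M; change (norm (minus (sum_n s M) L)) with (Cmod (sum_n s M - L)%C).
    replace (sum_n s M - L)%C with (- (L - sum_n s M))%C by ring; rewrite Cmod_opp.
    apply (norm_is_series_le _ _ (fun n => U n * (q ^ S M / (1 - q))) _ (Htail M));
      [|exact (is_series_scal_r _ _ _ HU)].
    intros n; change (norm ?z) with (Cmod z).
    rewrite Cmod_mult, Cmod_div, Cmod_pow by exact (Hw1 n).
    apply Rmult_le_compat; [apply Cmod_ge_0| |apply HuU|].
    + apply Rdiv_le_0_compat; [apply pow_le, Cmod_ge_0|pose proof (H1w n); lra].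
    + apply Rmult_le_compat; [apply pow_le, Cmod_ge_0| | |].
      * left; apply Rinv_0_lt_compat; pose proof (H1w n); lra.
      * apply pow_incr; split; [apply Cmod_ge_0|apply Hwq].
      * apply Rinv_le_contravar; [lra|apply H1w].
  - apply is_lim_seq_ext with (fun M => SU * q / (1 - q) * q ^ M).
    { intros M; simpl; field; lra. }
    replace (Finite 0) with (Rbar_mult (SU * q / (1 - q)) 0) by (simpl; f_equal; ring).
    apply is_lim_seq_scal_l, is_lim_seq_geom; rewrite Rabs_pos_eq; lra.
Qed.

Definition is_derive_C (f : R -> C) (x : R) (l : C) : Prop :=
  is_derive (fun t => Re (f t)) x (Re l) /\ is_derive (fun t => Im (f t)) x (Im l).

Lemma is_derive_C_ext (f g : R -> C) (x : R) (l : C) :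
  (forall t, f t = g t) -> is_derive_C f x l -> is_derive_C g x l.
Proof.
  intros Hfg [Hre Him]; split; apply (is_derive_ext _ _ _ _ (fun t => f_equal _ (Hfg t)));
    assumption.
Qed.

Lemma is_derive_C_RtoC (x : R) : is_derive_C RtoC x 1.
Proof.
  split; simpl; auto_derive; auto.
Qed.

Lemma is_derive_C_mult (f g : R -> C) (x : R) (df dg : C) :
  is_derive_C f x df -> is_derive_C g x dg ->
  is_derive_C (fun t => f t * g t)%C x (df * g x + f x * dg)%C.
Proof.
  intros [Hfr Hfi] [Hgr Hgi].
  pose proof (fun f g df dg Hf Hg => is_derive_mult f g x df dg Hf Hg Rmult_comm) as Hmult.
  split.
  - rewrite re_plus, !re_mult.
    replace (Re df * Re (g x) - Im df * Im (g x) + (Re (f x) * Re dg - Im (f x) * Im dg))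
      with ((Re df * Re (g x) + Re (f x) * Re dg) - (Im df * Im (g x) + Im (f x) * Im dg))
      by ring.
    apply (is_derive_ext (fun t => Re (f t) * Re (g t) - Im (f t) * Im (g t)));
      [intros t; symmetry; apply re_mult|].
    exact (is_derive_minus _ _ x _ _ (Hmult _ _ _ _ Hfr Hgr) (Hmult _ _ _ _ Hfi Hgi)).
  - rewrite im_plus, !im_mult.
    replace (Re df * Im (g x) + Im df * Re (g x) + (Re (f x) * Im dg + Im (f x) * Re dg))
      with ((Re df * Im (g x) + Re (f x) * Im dg) + (Im df * Re (g x) + Im (f x) * Re dg))
      by ring.
    apply (is_derive_ext (fun t => Re (f t) * Im (g t) + Im (f t) * Re (g t)));
      [intros t; symmetry; apply im_mult|].
    exact (is_derive_plus _ _ x _ _ (Hmult _ _ _ _ Hfr Hgi) (Hmult _ _ _ _ Hfi Hgr)).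
Qed.

Lemma Rcpow_eq (t : R) (w : C) :
  Rcpow t w = (exp (Re w * ln t) * cos (Im w * ln t), exp (Re w * ln t) * sin (Im w * ln t)).
Proof.
  unfold Rcpow, Cexp; rewrite re_scal_r, im_scal_r.
  destruct w as [a b]; unfold Cmult, RtoC; simpl; f_equal; ring.
Qed.

Lemma is_derive_C_Rcpow (w : C) (x : R) :
  0 < x -> is_derive_C (fun t => Rcpow t w) x (w * Rcpow x w / RtoC x)%C.
Proof.
  intros Hx; destruct w as [a b].
  assert (Hval : (((a, b) * Rcpow x (a, b)) / RtoC x)%C
    = ((a * cos (b * ln x) - b * sin (b * ln x)) * exp (a * ln x) / x,
       (a * sin (b * ln x) + b * cos (b * ln x)) * exp (a * ln x) / x)).
  { rewrite Rcpow_eq; unfold Cdiv, Cinv, Cmult, RtoC, Re, Im; simpl.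
    f_equal; field; lra. }
  rewrite Hval; split; eapply is_derive_ext; try (intros t; rewrite Rcpow_eq; reflexivity);
    simpl; auto_derive; try lra; field; lra.
Qed.

Lemma is_derive_C_Dx_x (f : R -> C) (x : R) (l : C) :
  is_derive_C (fun t => RtoC t * f t)%C x l -> Dx_x f x = l.
Proof.
  intros [Hre Him]; destruct l as [lre lim]; unfold Dx_x.
  f_equal; apply is_derive_unique; assumption.
Qed.

Lemma Dx_x_ext_loc (f g : R -> C) (x : R) :
  locally x (fun t => f t = g t) -> Dx_x f x = Dx_x g x.
Proof.
  intros Hfg; unfold Dx_x; f_equal; apply Derive_ext_loc;
    refine (filter_imp _ _ _ Hfg); intros t Ht; now rewrite Ht.
Qed.

Lemma Rabs_Im_le_Cmod (c : C) : Rabs (Im c) <= Cmod c.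
Proof. exact (Rle_trans _ _ _ (Rmax_r _ _) (Rmax_Cmod c)). Qed.

Lemma CSeries_real_pow (c : nat -> C) (t : R) :
  CSeries (fun n => c n * Cpow (RtoC t) n)%C
  = (PSeries (fun n => Re (c n)) t, PSeries (fun n => Im (c n)) t).
Proof.
  unfold CSeries, PSeries; f_equal; apply Series_ext; intros n;
    rewrite <- RtoC_pow; [rewrite re_scal_r|rewrite im_scal_r]; rewrite Rmult_comm; reflexivity.
Qed.

(* [x * f'(x) = sum_n n a_n x^n], read off from [PS_incr_1 (PS_derive a) n = n a_n]. *)
Lemma is_series_mult_PS_derive (a : nat -> R) (x : R) :
  Rbar_lt (Rabs x) (CV_radius a) ->
  is_series (fun n => INR n * a n * x ^ n) (x * PSeries (PS_derive a) x).
Proof.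
  intros Hx; rewrite <- PSeries_incr_1; apply is_pseries_R.
  refine (is_pseries_ext _ _ _ _ _ (PSeries_correct _ _ (CV_radius_inside _ _ _))).
  - intros [|n]; [simpl; rewrite Rmult_0_l|]; reflexivity.
  - now rewrite CV_radius_incr_1, CV_radius_derive.
Qed.

Lemma is_derive_C_power_series (c : nat -> C) (b : nat -> R) (x : R) :
  (forall n, Cmod (c n) <= b n) -> Rbar_lt (Rabs x) (CV_radius b) ->
  exists D, is_derive_C (fun t => CSeries (fun n => c n * Cpow (RtoC t) n)%C) x D /\
            is_series (fun n => RtoC (INR n) * c n * Cpow (RtoC x) n)%C (RtoC x * D)%C.
Proof.
  intros Hcb Hx.
  assert (Hrad : forall p : C -> R, (forall z, Rabs (p z) <= Cmod z) ->
                 Rbar_lt (Rabs x) (CV_radius (fun n => p (c n)))).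
  { intros p Hp; refine (Rbar_lt_le_trans _ _ _ Hx (CV_radius_le_of_Rabs_le _ _ _)).
    intros n; exact (Rle_trans _ _ _ (Hp (c n)) (Hcb n)). }
  pose proof (Hrad Re re_le_Cmod) as Hre; pose proof (Hrad Im Rabs_Im_le_Cmod) as Him.
  exists (PSeries (PS_derive (fun n => Re (c n))) x, PSeries (PS_derive (fun n => Im (c n))) x).
  split.
  - split; refine (is_derive_ext _ _ _ _ (fun t => f_equal _ (eq_sym (CSeries_real_pow c t))) _);
      apply is_derive_PSeries; assumption.
  - apply is_series_C; split; rewrite ?re_scal_l, ?im_scal_l.
    + refine (is_series_ext _ _ _ _ (is_series_mult_PS_derive _ _ Hre)); intros n.
      now rewrite <- RtoC_pow, re_scal_r, re_scal_l.
    + refine (is_series_ext _ _ _ _ (is_series_mult_PS_derive _ _ Him)); intros n.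
      now rewrite <- RtoC_pow, im_scal_r, im_scal_l.
Qed.

Lemma Cpow_div (z d : C) (k : nat) : d <> 0%C -> Cpow (z / d) k = (Cpow z k / Cpow d k)%C.
Proof.
  intros Hd; induction k as [|k IH]; simpl; [field; apply C1_nz|].
  rewrite IH; field; split; [apply Cpow_nz|]; exact Hd.
Qed.

Lemma Defs_Cpow_eq (z : C) (n : nat) : Defs.Cpow z n = Cpow z n.
Proof. induction n as [|n IH]; [reflexivity|simpl; now rewrite IH]. Qed.

Definition e_gen_coef (lam : R) (d : C) (k n : nat) : C :=
  (RtoC (e_coef lam n) / Cpow (RtoC (INR n) + d) k)%C.

Lemma e_lam_gen_CSeries (lam : R) (x d : C) (k : nat) :
  e_lam_gen lam x d k = CSeries (fun n => e_gen_coef lam d k n * Cpow x n)%C.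
Proof. apply CSeries_ext; intros n; now rewrite !Defs_Cpow_eq. Qed.

Lemma e_lam_gen_0 (lam : R) (x d : C) : e_lam_gen lam x d 0 = e_lam lam x.
Proof. apply CSeries_ext; intros n; cbn [Defs.Cpow]; f_equal; field; apply C1_nz. Qed.

Lemma CV_radius_e_coef_majorant (lam M : R) :
  lam <> 0 -> 0 < M -> CV_radius (fun n => M * e_coef (- Rabs lam) n) = / Rabs lam.
Proof.
  intros Hlam HM; rewrite <- (CV_radius_e_coef_opp (Rabs lam)) by now apply Rabs_pos_lt.
  exact (CV_radius_scal M _ (Rgt_not_eq _ _ HM)).
Qed.

Lemma ex_series_e_coef_majorant (lam M r : R) :
  lam <> 0 -> 0 < M -> Rabs r < / Rabs lam ->
  ex_series (fun n => M * e_coef (- Rabs lam) n * r ^ n).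
Proof.
  intros Hlam HM Hr; apply ex_series_Rabs, CV_disk_inside.
  now rewrite CV_radius_e_coef_majorant.
Qed.

Lemma Cmod_e_gen_coef_le (lam : R) (d : C) (m : R) (k n : nat) :
  0 < m -> m <= Cmod (RtoC (INR n) + d) ->
  Cmod (e_gen_coef lam d k n) <= (/ m) ^ k * e_coef (- Rabs lam) n.
Proof.
  intros Hm Hmd; assert (Hd : (RtoC (INR n) + d)%C <> 0%C)
    by (intros E; rewrite E, Cmod_0 in Hmd; lra).
  unfold e_gen_coef; rewrite Cmod_div by now apply Cpow_nz.
  rewrite Cmod_R, Cmod_pow; unfold Rdiv; rewrite Rmult_comm, <- pow_inv.
  apply Rmult_le_compat; [apply pow_le; left; apply Rinv_0_lt_compat; lra|apply Rabs_pos| |].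
  - apply pow_incr; split; [left; apply Rinv_0_lt_compat; lra|apply Rinv_le_contravar; lra].
  - apply Rabs_e_coef_le.
Qed.

Lemma is_series_e_lam_gen (lam : R) (x d : C) (m : R) (k : nat) :
  lam <> 0 -> Cmod x < / Rabs lam -> 0 < m -> (forall n, m <= Cmod (RtoC (INR n) + d)) ->
  is_series (fun n => e_gen_coef lam d k n * Cpow x n)%C (e_lam_gen lam x d k).
Proof.
  intros Hlam Hx Hm Hmd; rewrite e_lam_gen_CSeries; apply CSeries_correct.
  refine (ex_series_le _ _ _ (ex_series_e_coef_majorant lam ((/ m) ^ k) (Cmod x) Hlam _ _)).
  - intros n; change (norm ?z) with (Cmod z); rewrite Cmod_mult, Cmod_pow.
    apply Rmult_le_compat_r; [apply pow_le, Cmod_ge_0|].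
    exact (Cmod_e_gen_coef_le _ _ _ _ _ Hm (Hmd n)).
  - apply pow_lt, Rinv_0_lt_compat, Hm.
  - now rewrite Rabs_pos_eq by apply Cmod_ge_0.
Qed.

Definition xpow_e_lam_gen (lam : R) (delta : C) (k : nat) (t : R) : C :=
  (Rcpow t (delta - 1) * e_lam_gen lam (RtoC t) delta k)%C.

Section FixedParameters.

Variables (lam : R) (delta : C).
Hypotheses (Hlam : lam <> 0) (Hdelta : 0 < Re delta).

Lemma Cmod_delta_le_shift (n : nat) : Cmod delta <= Cmod (RtoC (INR n) + delta).
Proof.
  pose proof (pos_INR n); pose proof (Cmod_ge_0 delta).
  pose proof (Cmod_ge_0 (RtoC (INR n) + delta)).
  pose proof (Cmod2_alt delta); pose proof (Cmod2_alt (RtoC (INR n) + delta)).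
  rewrite re_plus, im_plus, re_RtoC, im_RtoC in *; nra.
Qed.

Lemma Cmod_delta_pos : 0 < Cmod delta.
Proof. exact (Rlt_le_trans _ _ _ (Rlt_le_trans _ _ _ Hdelta (Rle_abs _)) (re_le_Cmod delta)). Qed.

Lemma shift_delta_neq0 (n : nat) : (RtoC (INR n) + delta)%C <> 0%C.
Proof.
  intros E; pose proof (Cmod_delta_le_shift n) as H; pose proof Cmod_delta_pos.
  rewrite E, Cmod_0 in H; lra.
Qed.

Lemma e_gen_coef_S_term (k n : nat) (y : C) :
  (delta * (e_gen_coef lam delta (S k) n * Cpow y n)
   + RtoC (INR n) * e_gen_coef lam delta (S k) n * Cpow y n)%C
  = (e_gen_coef lam delta k n * Cpow y n)%C.
Proof.
  pose proof (shift_delta_neq0 n) as Hd.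
  unfold e_gen_coef; simpl Cpow; field; split; [apply Cpow_nz|]; exact Hd.
Qed.

Lemma e_lam_gen_derive_step (k : nat) (x : R) : 0 < x < / Rabs lam ->
  exists D, is_derive_C (fun t => e_lam_gen lam (RtoC t) delta (S k)) x D /\
            e_lam_gen lam (RtoC x) delta k
            = (delta * e_lam_gen lam (RtoC x) delta (S k) + RtoC x * D)%C.
Proof.
  intros Hx; assert (Hx' : Cmod (RtoC x) < / Rabs lam) by (rewrite Cmod_R, Rabs_pos_eq; lra).
  pose proof (is_series_e_lam_gen _ _ _ _ k Hlam Hx' Cmod_delta_pos Cmod_delta_le_shift) as Hk.
  pose proof (is_series_e_lam_gen _ _ _ _ (S k) Hlam Hx' Cmod_delta_pos Cmod_delta_le_shift) as HSk.
  destruct (is_derive_C_power_series (e_gen_coef lam delta (S k))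
              (fun n => (/ Cmod delta) ^ S k * e_coef (- Rabs lam) n) x) as [D [HD HxD]].
  { intros n; exact (Cmod_e_gen_coef_le _ _ _ _ _ Cmod_delta_pos (Cmod_delta_le_shift n)). }
  { rewrite CV_radius_e_coef_majorant, Rabs_pos_eq
      by (try apply pow_lt, Rinv_0_lt_compat, Cmod_delta_pos; lra).
    exact (proj2 Hx). }
  exists D; split.
  - exact (is_derive_C_ext _ _ _ _ (fun t => eq_sym (e_lam_gen_CSeries _ _ _ _)) HD).
  - rewrite <- (CSeries_unique _ _ Hk).
    apply CSeries_unique.
    refine (is_series_ext _ _ _ _ (is_series_plus _ _ _ _ (is_series_scal delta _ _ HSk) HxD)).
    intros n; exact (e_gen_coef_S_term k n (RtoC x)).
Qed.

Lemma Dx_x_xpow_e_lam_gen (k : nat) (x : R) : 0 < x < / Rabs lam ->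
  Dx_x (xpow_e_lam_gen lam delta (S k)) x = xpow_e_lam_gen lam delta k x.
Proof.
  intros Hx; destruct (e_lam_gen_derive_step k x Hx) as [D [HD Hstep]].
  apply is_derive_C_Dx_x.
  pose proof (is_derive_C_mult _ _ x _ _ (is_derive_C_RtoC x)
    (is_derive_C_mult _ _ x _ _ (is_derive_C_Rcpow (delta - 1) x (proj1 Hx)) HD)) as H.
  unfold xpow_e_lam_gen; rewrite Hstep.
  refine (eq_ind _ (is_derive_C _ x) H _ _).
  assert (Hx0 : RtoC x <> 0%C) by (intros E; apply RtoC_inj in E; lra).
  field; exact Hx0.
Qed.

Lemma Dx_x_iter_xpow_e_lam_gen (j k : nat) (x : R) : 0 < x < / Rabs lam ->
  Dx_x_iter j (xpow_e_lam_gen lam delta (k + j)) x = xpow_e_lam_gen lam delta k x.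
Proof.
  revert k x; induction j as [|j IH]; intros k x Hx; [now rewrite Nat.add_0_r|].
  replace (k + S j)%nat with (S k + j)%nat by lia; simpl Dx_x_iter.
  rewrite (Dx_x_ext_loc _ (xpow_e_lam_gen lam delta (S k))); [exact (Dx_x_xpow_e_lam_gen k x Hx)|].
  refine (filter_imp _ _ _ (open_and _ _ (open_gt 0) (open_lt (/ Rabs lam)) x Hx)).
  intros t Ht; exact (IH (S k) t Ht).
Qed.

Lemma is_series_e_lam_gen_generating (x z : C) :
  Cmod x < / Rabs lam -> Cmod z < Cmod delta ->
  is_series (fun k => e_lam_gen lam x delta k * Cpow z k)%C
            (e_lam lam x + z * e_lam_gen lam x (delta - z) 1)%C.
Proof.
  intros Hx Hz; pose proof Cmod_delta_pos as Hdelta0.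
  pose proof shift_delta_neq0 as Hd.
  assert (Hdz : forall n, Cmod delta - Cmod z <= Cmod (RtoC (INR n) + (delta - z))%C).
  { intros n; pose proof (Cmod_delta_le_shift n);
      pose proof (Cmod_triangle (RtoC (INR n) + (delta - z))%C z) as Htri.
    replace (RtoC (INR n) + (delta - z) + z)%C with (RtoC (INR n) + delta)%C in Htri by ring; lra. }
  assert (Hdz0 : forall n, (RtoC (INR n) + (delta - z))%C <> 0%C).
  { intros n E; pose proof (Hdz n) as H; rewrite E, Cmod_0 in H; lra. }
  apply (is_series_geometric_interchange (fun n => e_gen_coef lam delta 0 n * Cpow x n)%C
           (fun n => z / (RtoC (INR n) + delta))%C _
           (fun n => (/ Cmod delta) ^ 0 * e_coef (- Rabs lam) n * Cmod x ^ n)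
           (Series (fun n => (/ Cmod delta) ^ 0 * e_coef (- Rabs lam) n * Cmod x ^ n))
           (Cmod z / Cmod delta)).
  - intros n; rewrite Cmod_mult, Cmod_pow; apply Rmult_le_compat_r; [apply pow_le, Cmod_ge_0|].
    exact (Cmod_e_gen_coef_le _ _ _ _ _ Hdelta0 (Cmod_delta_le_shift n)).
  - apply Series_correct, ex_series_e_coef_majorant; [exact Hlam|simpl; lra|].
    now rewrite Rabs_pos_eq by apply Cmod_ge_0.
  - apply Rlt_div_l; lra.
  - intros n; rewrite Cmod_div by exact (Hd n).
    apply Rmult_le_compat_l; [apply Cmod_ge_0|].
    apply Rinv_le_contravar; [exact Hdelta0|apply Cmod_delta_le_shift].
  - intros k; pose proof (is_series_scal (Cpow z k) _ _
      (is_series_e_lam_gen _ _ _ _ k Hlam Hx Hdelta0 Cmod_delta_le_shift)) as H.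
    change (scal ?a ?b) with (Cmult a b) in H; rewrite Cmult_comm.
    refine (is_series_ext _ _ _ _ H); intros n.
    assert (Hterm : (Cpow z k * (e_gen_coef lam delta k n * Cpow x n))%C
      = (e_gen_coef lam delta 0 n * Cpow x n * Cpow (z / (RtoC (INR n) + delta)) k)%C).
    { unfold e_gen_coef; rewrite Cpow_div by exact (Hd n); simpl Cpow.
      field; apply Cpow_nz, Hd. }
    exact Hterm.
  - pose proof (is_series_e_lam_gen _ _ _ _ 0 Hlam Hx Hdelta0 Cmod_delta_le_shift) as H0.
    rewrite e_lam_gen_0 in H0.
    pose proof (is_series_e_lam_gen _ _ _ _ 1 Hlam Hx (proj2 (Rlt_0_minus _ _) Hz) Hdz) as H1.
    refine (is_series_ext _ _ _ _ (is_series_plus _ _ _ _ H0 (is_series_scal z _ _ H1))).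
    intros n.
    assert (Hterm : (e_gen_coef lam delta 0 n * Cpow x n
                     + z * (e_gen_coef lam (delta - z) 1 n * Cpow x n))%C
      = (e_gen_coef lam delta 0 n * Cpow x n / (1 - z / (RtoC (INR n) + delta)))%C).
    { unfold e_gen_coef; simpl Cpow; field; split; [exact (Hd n)|].
      intros E; apply (Hdz0 n); rewrite <- E; ring. }
    exact Hterm.
Qed.

End FixedParameters.

Theorem theorem3 (lam : R) (delta : C) (Hlam : lam <> 0) (Hdelta : 0 < Re delta) :
  (forall (p : nat) (x : R), (1 <= p)%nat -> 0 < x -> x < 1 / Rabs lam ->
     Dx_x_iter p (fun t => Cmult (Rcpow t (Cminus delta (RtoC 1)))
                                 (e_lam_gen lam (RtoC t) delta p)) x
     = Cmult (Rcpow x (Cminus delta (RtoC 1))) (e_lam lam (RtoC x)))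
  /\
  (forall (x z : C), Cmod x < 1 / Rabs lam -> Cmod z < Cmod delta ->
     is_series (fun k => Cmult (e_lam_gen lam x delta k) (Cpow z k))
               (Cplus (e_lam lam x) (Cmult z (e_lam_gen lam x (Cminus delta z) 1)))).
Proof.
  rewrite Rdiv_1_l; split.
  - intros p x _ Hx0 Hx1.
    pose proof (Dx_x_iter_xpow_e_lam_gen lam delta Hlam Hdelta p 0 x (conj Hx0 Hx1)) as H.
    unfold xpow_e_lam_gen at 2 in H; rewrite e_lam_gen_0 in H; exact H.
  - intros x z Hx Hz; exact (is_series_e_lam_gen_generating lam delta Hlam Hdelta x z Hx Hz).
Qed.
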